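(* Let $E$ be a finite-dimensional complex Hilbert space, $e\in E$ a unit vector, $0<\tau<1$, and define $$\Phi(S):=S^{1/2}\bigl(I_E-\tau|e\rangle\langle e|\bigr)S^{1/2},\qquad S\in B(E)_+.$$ For $S\in B(E)_+$ the following are equivalent: (1) $\Phi(S)=S$; (2) $S^{1/2}e=0$; (3) $Se=0$; (4) $\mathrm{ran}(S)\subseteq e^\perp$. In particular, every positive operator supported on $e^\perp$ is a fixed point of $\Phi$. Consequently, for any $T_0\in B(E)_+$, with $T_{n+1}:=\Phi(T_n)$ and $T_\infty:=\lim_nT_n$, the limit $T_\infty$ is a fixed point of $\Phi$, and therefore $T_\infty e=0$ and $\mathrm{ran}(T_\infty)\subseteq e^\perp$.
   Context: For vectors $x,y$, $|x\rangle\langle y|$ denotes the operator $z\mapsto\langle y,z\rangle x$. $B(E)_+$ denotes positive operators; $S^{1/2}$ is the positive square root. The sequence $T_n$ is decreasing in the operator order, so its norm limit exists. *)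

From HB Require Import structures.
From mathcomp Require Import all_boot all_order all_algebra.
From mathcomp Require Import sesquilinear.
From mathcomp Require Import complex.
From mathcomp Require Import boolp classical_sets reals filter topology normedtype sequences.

Set Implicit Arguments.
Unset Strict Implicit.
Unset Printing Implicit Defensive.

Import Order.TTheory GRing.Theory Num.Theory.
Import numFieldNormedType.Exports.
Local Open Scope ring_scope.
Local Open Scope complex_scope.
Local Open Scope classical_set_scope.

(* E = C^n (column vectors 'cV[R[i]]_n), B(E) = 'M[R[i]]_n.
   Inner product <y, z> = y^* z (conjugate-linear in the first slot). *)

Section Defs.
Variables (R : realType) (n : nat).
Local Notation C := R[i].

Definition adj (p q : nat) (A : 'M[C]_(p, q)) : 'M[C]_(q, p) := (map_mx Num.conj A)^T.

Definition inner (y z : 'cV[C]_n) : C := (adj y *m z) 0 0.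

Definition psd (A : 'M[C]_n) : Prop :=
  adj A = A /\ forall x : 'cV[C]_n, 0 <= inner x (A *m x).

(* S^{1/2}: the (unique) positive square root; defined by choice,
   default 0 when S is not positive (never used there). *)
Definition psd_sqrt (S : 'M[C]_n) : 'M[C]_n :=
  match pselect (exists B : 'M[C]_n, psd B /\ B *m B = S) with
  | left h => proj1_sig (cid h)
  | right _ => 0
  end.

Definition ketbra (x y : 'cV[C]_n) : 'M[C]_n := x *m adj y.

Definition Phi (tau : R) (e : 'cV[C]_n) (S : 'M[C]_n) : 'M[C]_n :=
  psd_sqrt S *m (1%:M - (tau%:C) *: ketbra e e) *m psd_sqrt S.

Definition ran_in_perp (S : 'M[C]_n) (e : 'cV[C]_n) : Prop :=
  forall x : 'cV[C]_n, inner e (S *m x) = 0.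

(* convergence of a sequence of operators (finite dimension: norm
   convergence is equivalent to entrywise convergence) *)
Definition mx_cvg (T : nat -> 'M[C]_n) (L : 'M[C]_n) : Prop :=
  forall i j : 'I_n,
    (fun k => complex.Re (T k i j)) @ \oo --> complex.Re (L i j) /\
    (fun k => complex.Im (T k i j)) @ \oo --> complex.Im (L i j).

End Defs.

From HB Require Import structures.
From mathcomp Require Import all_boot all_order all_algebra.
From mathcomp Require Import complex sesquilinear spectral ring.
From mathcomp Require Import boolp classical_sets reals filter topology normedtype sequences.
Import Order.TTheory GRing.Theory Num.Theory.
Import numFieldNormedType.Exports.
Set Implicit Arguments.
Unset Strict Implicit.
Unset Printing Implicit Defensive.
Local Open Scope complex_scope.
Local Open Scope ring_scope.
Local Open Scope classical_set_scope.

(* With B := S^{1/2} we have Phi(S) = S - tau |Be><Be|, so Phi(S) = S iff Be = 0;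
   as S = B^2 and <e, S x> = <S e, x>, this is equivalent to Se = 0 and to
   ran S <= e^perp. Phi preserves positivity since, for the projection
   P = |e><e|, I - tau P = (I - P)^* (I - P) + (1 - tau) P^* P.
   Along an orbit every quadratic form <x, T_k x> decreases by
   tau |<x, T_k^{1/2} e>|^2 and stays nonnegative, so it converges, and
   polarization turns this into entrywise convergence of T_k. Finally
   tr T_(k+1) = tr T_k - tau <e, T_k e>, so <e, T_k e> tends to 0: the limit
   satisfies <e, T_inf e> = 0, hence T_inf^{1/2} e = 0 and T_inf is fixed. *)

Local Notation quad M x := (inner x (M *m x)).

Section Adjoint.
Variable R : realType.
Local Notation C := R[i].

Lemma adjmxE p q (A : 'M[C]_(p, q)) : adj A = (A ^t* )%sesqui.
Proof. by rewrite /adj map_trmx. Qed.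

Lemma adjmxM p q r (A : 'M[C]_(p, q)) (B : 'M[C]_(q, r)) :
  adj (A *m B) = adj B *m adj A.
Proof. by rewrite /adj map_mxM trmx_mul. Qed.

Lemma adjmxK p q (A : 'M[C]_(p, q)) : adj (adj A) = A.
Proof. by rewrite !adjmxE trmxCK. Qed.

Lemma adjmxD p q (A B : 'M[C]_(p, q)) : adj (A + B) = adj A + adj B.
Proof. by rewrite /adj map_mxD linearD. Qed.

Lemma adjmxZ p q (c : C) (A : 'M[C]_(p, q)) : adj (c *: A) = c^* *: adj A.
Proof. by rewrite /adj map_mxZ linearZ. Qed.

Lemma adjmxN p q (A : 'M[C]_(p, q)) : adj (- A) = - adj A.
Proof. by rewrite -scaleN1r adjmxZ rmorphN1 scaleN1r. Qed.

Lemma adjmxB p q (A B : 'M[C]_(p, q)) : adj (A - B) = adj A - adj B.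
Proof. by rewrite adjmxD adjmxN. Qed.

Lemma adjmx0 p q : adj (0 : 'M[C]_(p, q)) = 0.
Proof. by rewrite /adj map_mx0 trmx0. Qed.

Lemma adjmx1 p : adj (1%:M : 'M[C]_p) = 1%:M.
Proof. by rewrite /adj map_mx1 trmx1. Qed.

Lemma adjmx_delta p q i j : adj (delta_mx i j : 'M[C]_(p, q)) = delta_mx j i.
Proof. by rewrite /adj map_delta_mx trmx_delta. Qed.

End Adjoint.

Section Inner.
Variables (R : realType) (n : nat).
Local Notation C := R[i].
Implicit Types (x y : 'cV[C]_n) (M : 'M[C]_n).

Lemma innerE x y : inner x y = \sum_i (x i 0)^* * y i 0.
Proof. by rewrite /inner mxE; apply: eq_bigr => i _; rewrite /adj !mxE. Qed.

Lemma inner_ge0 x : 0 <= inner x x.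
Proof. by rewrite innerE; apply: sumr_ge0 => i _; rewrite mulrC mul_conjC_ge0. Qed.

Lemma inner_eq0 x : inner x x = 0 -> x = 0.
Proof.
rewrite innerE => /psumr_eq0P x0; apply/matrixP => i j; rewrite ord1 mxE.
have /eqP : (x i 0)^* * x i 0 = 0 by apply: x0 => // k _; rewrite mulrC mul_conjC_ge0.
by rewrite mulrC mul_conjC_eq0 => /eqP.
Qed.

Lemma inner_conj x y : inner y x = (inner x y)^*.
Proof.
rewrite !innerE rmorph_sum; apply: eq_bigr => i _.
by rewrite rmorphM /= conjCK mulrC.
Qed.

Lemma innerBr x y z : inner x (y - z) = inner x y - inner x z.
Proof. by rewrite /inner mulmxBr !mxE. Qed.

Lemma innerZr (c : C) x y : inner x (c *: y) = c * inner x y.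
Proof. by rewrite /inner -scalemxAr mxE. Qed.

Lemma inner_mulmx p (A : 'M[C]_(n, p)) (x : 'cV[C]_p) y :
  inner (A *m x) y = inner x (adj A *m y).
Proof. by rewrite /inner adjmxM mulmxA. Qed.

Lemma inner_delta M i j : inner (delta_mx i 0) (M *m delta_mx j 0) = M i j.
Proof. by rewrite /inner mulmxA adjmx_delta -rowE -colE !mxE. Qed.

Lemma mulmx_adj_inner x y : adj x *m y = (inner x y)%:M.
Proof. exact: mx11_scalar. Qed.

Lemma quad_adjmx_mul p (A : 'M[C]_(n, p)) M (x : 'cV[C]_p) :
  quad (adj A *m M *m A) x = quad M (A *m x).
Proof. by rewrite inner_mulmx !mulmxA. Qed.

Lemma innerDl x y z : inner (x + y) z = inner x z + inner y z.
Proof. by rewrite /inner adjmxD mulmxDl !mxE. Qed.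

Lemma innerDr x y z : inner x (y + z) = inner x y + inner x z.
Proof. by rewrite /inner mulmxDr !mxE. Qed.

Lemma innerZl (c : C) x y : inner (c *: x) y = c^* * inner x y.
Proof. by rewrite /inner adjmxZ -scalemxAl mxE. Qed.

Lemma quad_addZ M x y (c : C) : quad M (x + c *: y) =
  quad M x + c^* * c * quad M y + c * inner x (M *m y) + c^* * inner y (M *m x).
Proof.
by rewrite mulmxDr -scalemxAr !innerDl !innerDr !innerZl !innerZr; ring.
Qed.

Lemma polarization M x y : inner x (M *m y) =
  4^-1 * \sum_(c <- [:: 1; -1; 'i; - 'i]) c^* * quad M (x + c *: y).
Proof.
under eq_bigr => c _ do rewrite quad_addZ.
(* Generalizing the four forms keeps the rewrites below from unfolding matrix
   arithmetic, which is prohibitively slow. *)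
move: (quad M x) (quad M y) (inner x (M *m y)) (inner y (M *m x)) => qx qy a b.
have iNJ : (- 'i)^* = 'i :> C by rewrite -conjCi conjCK.
rewrite !big_cons big_nil conjC1 conjCN1 conjCi iNJ.
have i2 : 'i * 'i = -1 :> C by rewrite -expr2 sqrCi.
apply: (@mulfI _ 4); first by rewrite pnatr_eq0.
by rewrite mulrA mulfV ?pnatr_eq0 // mul1r; ring: i2.
Qed.

End Inner.

Section Positive.
Variables (R : realType) (n : nat).
Local Notation C := R[i].
Implicit Types (x y : 'cV[C]_n) (M S : 'M[C]_n).

Lemma psd_gram p (A : 'M[C]_(p, n)) : psd (adj A *m A).
Proof.
split; first by rewrite adjmxM adjmxK.
by move=> x; rewrite -mulmxA -inner_mulmx inner_ge0.
Qed.

Lemma psd_congr p (A : 'M[C]_(n, p)) M : psd M -> psd (adj A *m M *m A).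
Proof.
move=> [M_herm M_ge0]; split; first by rewrite !adjmxM adjmxK M_herm mulmxA.
by move=> x; rewrite quad_adjmx_mul.
Qed.

Lemma psdD M N : psd M -> psd N -> psd (M + N).
Proof.
move=> [M_herm M_ge0] [N_herm N_ge0]; split; first by rewrite adjmxD M_herm N_herm.
by move=> x; rewrite /inner mulmxDl mulmxDr mxE addr_ge0 ?M_ge0 ?N_ge0.
Qed.

Lemma psdZ (c : C) M : 0 <= c -> psd M -> psd (c *: M).
Proof.
move=> c_ge0 [M_herm M_ge0]; split; first by rewrite adjmxZ geC0_conj ?M_herm.
by move=> x; rewrite /inner -scalemxAl -scalemxAr mxE mulr_ge0 ?M_ge0.
Qed.

Lemma psd_diag_mx (d : 'rV[C]_n) : (forall i, 0 <= d 0 i) -> psd (diag_mx d).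
Proof.
move=> d_ge0; split.
  rewrite /adj map_diag_mx tr_diag_mx; congr diag_mx.
  by apply/matrixP => i j; rewrite ord1 mxE; apply: geC0_conj.
move=> x; rewrite innerE; apply: sumr_ge0 => i _.
by rewrite mul_diag_mx mxE mulrCA mulr_ge0 // mulrC mul_conjC_ge0.
Qed.

Lemma psd_sqrt_exists S : psd S -> exists B, psd B /\ B *m B = S.
Proof.
move=> [S_herm S_ge0]; pose P := spectralmx S; pose d := spectral_diag S.
have PadjP : P *m adj P = 1%:M by rewrite adjmxE; apply/unitarymxP/spectral_unitarymx.
have invP : invmx P = adj P by rewrite adjmxE invmx_unitary ?spectral_unitarymx.
have adjPP : adj P *m P = 1%:M by rewrite -invP mulVmx ?spectral_unit.
have S_diag : S = adj P *m diag_mx d *m P.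
  rewrite -invP; apply/orthomx_spectralP/hermitian_normalmx/is_hermitianmxP.
  by rewrite expr0 scale1r -adjmxE S_herm.
have d_ge0 i : 0 <= d 0 i.
  have -> : d 0 i = quad (P *m S *m adj P) (delta_mx i 0).
    rewrite S_diag !mulmxA PadjP mul1mx -(mulmxA (diag_mx d)) PadjP mulmx1.
    by rewrite inner_delta mxE eqxx mulr1n.
  by rewrite -[P in P *m S]adjmxK quad_adjmx_mul.
pose s := map_mx sqrtC d.
exists (adj P *m diag_mx s *m P); split.
  by apply: psd_congr; apply: psd_diag_mx => i; rewrite mxE sqrtC_ge0.
rewrite -!mulmxA (mulmxA P) PadjP mul1mx (mulmxA (diag_mx s)) mulmx_diag mulmxA S_diag.
congr (_ *m diag_mx _ *m _).
by apply/matrixP => i j; rewrite ord1 !mxE -expr2 sqrtCK.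
Qed.

Lemma psd_sqrt_spec S : psd S -> psd (psd_sqrt S) /\ psd_sqrt S *m psd_sqrt S = S.
Proof.
move=> /psd_sqrt_exists S_sqrt; rewrite /psd_sqrt.
by case: pselect => // h; case: (cid h).
Qed.

Lemma psd_sqrt_psd S : psd S -> psd (psd_sqrt S).
Proof. by case/psd_sqrt_spec. Qed.

Lemma psd_sqrt_adj S : psd S -> adj (psd_sqrt S) = psd_sqrt S.
Proof. by case/psd_sqrt_psd. Qed.

Lemma psd_sqrtK S : psd S -> psd_sqrt S *m psd_sqrt S = S.
Proof. by case/psd_sqrt_spec. Qed.

Lemma quad_psd_sqrt S x : psd S ->
  quad S x = inner (psd_sqrt S *m x) (psd_sqrt S *m x).
Proof.
by move=> S_psd; rewrite inner_mulmx psd_sqrt_adj // mulmxA psd_sqrtK.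
Qed.

Lemma psd_quad_eq0 S x : psd S -> quad S x = 0 -> psd_sqrt S *m x = 0.
Proof. by move=> S_psd; rewrite quad_psd_sqrt //; apply: inner_eq0. Qed.

End Positive.

Section Ketbra.
Variables (R : realType) (n : nat).
Local Notation C := R[i].
Implicit Types (x y z w : 'cV[C]_n).

Lemma inner_ketbra x y z w : inner z (ketbra x y *m w) = inner z x * inner y w.
Proof.
by rewrite /ketbra -mulmxA mulmx_adj_inner mul_mx_scalar innerZr mulrC.
Qed.

Lemma ketbra_eq0 x : ketbra x x = 0 -> x = 0.
Proof.
move=> xx0; apply: inner_eq0; apply/eqP; rewrite -[_ == 0]orbb -mulf_eq0.
by rewrite -inner_ketbra xx0 mul0mx /inner mulmx0 mxE.
Qed.

Lemma adj_ketbra x y : adj (ketbra x y) = ketbra y x.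
Proof. by rewrite /ketbra adjmxM adjmxK. Qed.

Lemma ketbra_idem x : inner x x = 1 -> ketbra x x *m ketbra x x = ketbra x x.
Proof.
by move=> x1; rewrite /ketbra mulmxA -(mulmxA x) mulmx_adj_inner x1 mulmx1.
Qed.

Lemma psd_id_sub_ketbra x (t : R) : inner x x = 1 -> t <= 1 ->
  psd (1%:M - t%:C *: ketbra x x).
Proof.
move=> x1 t_le1; set P := ketbra x x.
have P_adj : adj P = P by rewrite adj_ketbra.
have -> : 1%:M - t%:C *: P = adj (1%:M - P) *m (1%:M - P) + (1 - t%:C) *: (adj P *m P).
  rewrite adjmxB adjmx1 P_adj mulmxBl mul1mx mulmxBr mulmx1 ketbra_idem //.
  by rewrite subrr subr0 scalerBl scale1r addrA subrK.
apply: psdD; first exact: psd_gram.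
by apply: psdZ; [rewrite subr_ge0 lecR | exact: psd_gram].
Qed.

End Ketbra.

Section PhiMap.
Variables (R : realType) (n : nat) (e : 'cV[R[i]]_n) (tau : R).
Local Notation C := R[i].
Implicit Types (x : 'cV[C]_n) (S : 'M[C]_n).

Lemma Phi_psdE S : psd S ->
  Phi tau e S = S - tau%:C *: ketbra (psd_sqrt S *m e) (psd_sqrt S *m e).
Proof.
move=> S_psd; rewrite /Phi mulmxBr mulmx1 mulmxBl psd_sqrtK //; congr (_ - _).
by rewrite -scalemxAr -scalemxAl /ketbra adjmxM psd_sqrt_adj // !mulmxA.
Qed.

Lemma Phi_fixed_tfae S : tau != 0 -> psd S ->
  [<-> Phi tau e S = S; psd_sqrt S *m e = 0; S *m e = 0; ran_in_perp S e].
Proof.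
move=> tau_neq0 S_psd; tfae.
- rewrite Phi_psdE // => /(congr1 (fun M => S - M)); rewrite subKr subrr => /eqP.
  by rewrite scaler_eq0 fmorph_eq0 (negPf tau_neq0) => /eqP/ketbra_eq0.
- by move=> sqrt_e0; rewrite -(psd_sqrtK S_psd) -mulmxA sqrt_e0 mulmx0.
- move=> Se0 x; case: S_psd => S_adj _.
  by rewrite -S_adj -inner_mulmx Se0 /inner adjmx0 mul0mx mxE.
- move=> perp; rewrite Phi_psdE // psd_quad_eq0 ?perp //.
  by rewrite /ketbra mul0mx scaler0 subr0.
Qed.

Lemma psd_Phi S : inner e e = 1 -> tau <= 1 -> psd S -> psd (Phi tau e S).
Proof.
move=> e1 tau_le1 S_psd; rewrite /Phi -{1}(psd_sqrt_adj S_psd).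
exact/psd_congr/psd_id_sub_ketbra.
Qed.

Lemma quad_Phi S x : psd S ->
  quad (Phi tau e S) x = quad S x - tau%:C * `|inner x (psd_sqrt S *m e)| ^+ 2.
Proof.
move=> S_psd; rewrite Phi_psdE // mulmxBl -scalemxAl innerBr innerZr.
by rewrite inner_ketbra normCK -inner_conj.
Qed.

Lemma quad_Phi_le S x : 0 <= tau -> psd S -> quad (Phi tau e S) x <= quad S x.
Proof.
move=> tau_ge0 S_psd; rewrite quad_Phi // lerBlDr lerDl.
by apply: mulr_ge0; rewrite ?ler0c ?exprn_ge0.
Qed.

Lemma mxtrace_Phi S : psd S -> \tr (Phi tau e S) = \tr S - tau%:C * quad S e.
Proof.
move=> S_psd; rewrite Phi_psdE // linearB linearZ /= quad_psd_sqrt //.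
by rewrite /ketbra mxtrace_mulC mulmx_adj_inner mxtrace_scalar.
Qed.

End PhiMap.

Section ComplexCvg.
Variable R : realType.
Local Notation C := R[i].
Local Notation Re := (@complex.Re R).
Local Notation Im := (@complex.Im R).
Implicit Types (u v : nat -> C) (a b c : C).

(* [R[i]] carries no topology in the analysis library: complex convergence is
   taken componentwise, as in [mx_cvg]. *)
Definition ccvg u a :=
  (fun k => Re (u k)) @ \oo --> Re a /\ (fun k => Im (u k)) @ \oo --> Im a.

Lemma ccvgD u v a b : ccvg u a -> ccvg v b -> ccvg (fun k => u k + v k) (a + b).
Proof.
move=> [Ru Iu] [Rv Iv]; rewrite /ccvg !raddfD.
by split; under eq_cvg do rewrite raddfD; apply: cvgD.
Qed.

Lemma ccvgMl c u a : ccvg u a -> ccvg (fun k => c * u k) (c * a).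
Proof.
have ReM x y : Re (x * y) = Re x * Re y - Im x * Im y by case: x y => [? ?] [? ?].
have ImM x y : Im (x * y) = Re x * Im y + Im x * Re y by case: x y => [? ?] [? ?].
move=> [Ru Iu]; rewrite /ccvg ReM ImM; split.
  by under eq_cvg do rewrite ReM; apply: cvgB; apply: cvgMl_tmp.
by under eq_cvg do rewrite ImM; apply: cvgD; apply: cvgMl_tmp.
Qed.

Lemma ccvgMr c u a : ccvg u a -> ccvg (fun k => u k * c) (a * c).
Proof. by rewrite mulrC; under eq_fun do rewrite mulrC; apply: ccvgMl. Qed.

Lemma ccvgB u v a b : ccvg u a -> ccvg v b -> ccvg (fun k => u k - v k) (a - b).
Proof.
move=> u_a /(ccvgMl (-1)); rewrite mulN1r; under eq_fun do rewrite mulN1r.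
exact: ccvgD.
Qed.

Lemma ccvg_sum (I : Type) (r : seq I) (P : pred I) (u : I -> nat -> C) (a : I -> C) :
  (forall i, P i -> ccvg (u i) (a i)) ->
  ccvg (fun k => \sum_(i <- r | P i) u i k) (\sum_(i <- r | P i) a i).
Proof.
move=> u_a; rewrite /ccvg !raddf_sum.
split; under eq_cvg do rewrite raddf_sum; apply: cvg_big => //;
  by [exact: add_continuous | move=> i /u_a [? ?]].
Qed.

Lemma ccvg_conj u a : ccvg u a -> ccvg (fun k => (u k)^*) a^*.
Proof.
have ReJ x : Re x^* = Re x by case: x.
have ImJ x : Im x^* = - Im x by case: x.
move=> [Ru Iu]; rewrite /ccvg ReJ ImJ.
by split; under eq_cvg do rewrite ?ReJ ?ImJ; last apply: cvgN.
Qed.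

Lemma ccvg_shiftS u a : ccvg u a -> ccvg (fun k => u k.+1) a.
Proof.
by case=> Ru Iu; split;
  [rewrite (cvg_shiftS (fun k => Re (u k))) | rewrite (cvg_shiftS (fun k => Im (u k)))].
Qed.

Lemma ccvg_unique u a b : ccvg u a -> ccvg u b -> a = b.
Proof.
move=> [Ra Ia] [Rb Ib]; apply/eqP.
by rewrite eq_complex (cvg_unique (@Rhausdorff R) Ra Rb) (cvg_unique (@Rhausdorff R) Ia Ib)
  !eqxx.
Qed.

Lemma ler_Re a b : a <= b -> Re a <= Re b.
Proof. by rewrite lecE => /andP[]. Qed.

Lemma ccvg_ge0 u a : (forall k, 0 <= u k) -> ccvg u a -> 0 <= a.
Proof.
move=> u_ge0 [Ru Iu]; rewrite lecE; apply/andP; split.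
  have Im_u0 : (fun k => Im (u k)) = fun=> 0 by apply/funext => k; rewrite ger0_Im.
  rewrite Im_u0 in Iu; apply/eqP; apply: (cvg_unique (@Rhausdorff R) Iu); exact: cvg_cst.
rewrite -(cvg_lim (@Rhausdorff R) Ru); apply: limr_ge; first by apply/cvg_ex; exists (Re a).
by apply: nearW => k; apply/ler_Re/u_ge0.
Qed.

Lemma nonincreasing_ccvg u : (forall k, 0 <= u k) -> (forall k, u k.+1 <= u k) ->
  exists a, ccvg u a.
Proof.
move=> u_ge0 u_decr; exists (inf ((fun k => Re (u k)) @` setT))%:C; split.
  apply: nonincreasing_cvgn; last by exists 0 => _ [k _ <-]; exact: ler_Re (u_ge0 k).
  by apply/nonincreasing_seqP => k; apply/ler_Re/u_decr.
have -> : (fun k => Im (u k)) = fun=> 0 by apply/funext => k; rewrite ger0_Im.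
exact: cvg_cst.
Qed.

End ComplexCvg.

Section MatrixCvg.
Variables (R : realType) (n : nat).
Local Notation C := R[i].
Implicit Types (T : nat -> 'M[C]_n) (L : 'M[C]_n).

Lemma mx_cvgE T L : mx_cvg T L = forall i j, ccvg (fun k => T k i j) (L i j).
Proof. by []. Qed.

Lemma mx_cvg_unique T L1 L2 : mx_cvg T L1 -> mx_cvg T L2 -> L1 = L2.
Proof. by move=> TL1 TL2; apply/matrixP => i j; apply: ccvg_unique (TL1 i j) (TL2 i j). Qed.

Lemma mx_cvg_adj T L : mx_cvg T L -> mx_cvg (fun k => adj (T k)) (adj L).
Proof.
have adj_ij M i j : adj M i j = (M j i)^* by rewrite !mxE.
rewrite !mx_cvgE => TL i j; rewrite adj_ij; under eq_fun do rewrite adj_ij.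
exact: ccvg_conj.
Qed.

Lemma ccvg_inner T L x y : mx_cvg T L ->
  ccvg (fun k => inner x (T k *m y)) (inner x (L *m y)).
Proof.
have inner_entries M : inner x (M *m y) = \sum_i (x i 0)^* * \sum_j M i j * y j 0.
  by rewrite innerE; apply: eq_bigr => i _; rewrite mxE.
move=> TL; rewrite inner_entries; under eq_fun do rewrite inner_entries.
by apply: ccvg_sum => i _; apply/ccvgMl/ccvg_sum => j _; apply/ccvgMr/TL.
Qed.

Lemma ccvg_trace T L : mx_cvg T L -> ccvg (fun k => \tr (T k)) (\tr L).
Proof. by move=> TL; apply: ccvg_sum => i _; apply: TL. Qed.

Lemma psd_mx_cvg T L : (forall k, psd (T k)) -> mx_cvg T L -> psd L.
Proof.
move=> T_psd TL; split.
  apply: mx_cvg_unique (mx_cvg_adj TL) _.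
  by under eq_fun do rewrite (proj1 (T_psd _)).
by move=> x; apply: ccvg_ge0 (ccvg_inner x x TL) => k; case: (T_psd k) => _.
Qed.

End MatrixCvg.

Section Iteration.
Variables (R : realType) (n : nat) (e : 'cV[R[i]]_n) (tau : R) (T0 : 'M[R[i]]_n).
Hypotheses (e1 : inner e e = 1) (tau_gt0 : 0 < tau) (tau_le1 : tau <= 1) (T0_psd : psd T0).
Local Notation T k := (iter k (Phi tau e) T0).

Lemma psd_iter_Phi k : psd (T k).
Proof. by elim: k => //= k; apply: psd_Phi. Qed.

Lemma iter_Phi_quad_cvg x : exists a, ccvg (fun k => quad (T k) x) a.
Proof.
apply: nonincreasing_ccvg => k; first by case: (psd_iter_Phi k) => _.
by apply: quad_Phi_le; [apply: ltW | apply: psd_iter_Phi].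
Qed.

Lemma iter_Phi_cvg : exists L, mx_cvg (fun k => T k) L.
Proof.
have [q T_q] := choice iter_Phi_quad_cvg.
exists (\matrix_(i, j) (4^-1 * \sum_(c <- [:: 1; -1; 'i; - 'i])
                         c^* * q (delta_mx i 0 + c *: delta_mx j 0))).
rewrite mx_cvgE => i j; rewrite mxE.
under eq_fun do rewrite -inner_delta polarization.
by apply/ccvgMl/ccvg_sum => c _; apply/ccvgMl/T_q.
Qed.

Lemma iter_Phi_lim_quad L : mx_cvg (fun k => T k) L -> quad L e = 0.
Proof.
move=> TL; apply: ccvg_unique (ccvg_inner e e TL) _.
have tau_neq0 : tau%:C != 0 :> R[i] by rewrite fmorph_eq0 (gt_eqF tau_gt0).
have -> : (fun k => quad (T k) e) = fun k => tau%:C^-1 * (\tr (T k) - \tr (T k.+1)).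
  apply/funext => k; rewrite iterS mxtrace_Phi; last exact: psd_iter_Phi.
  by rewrite opprB addrC subrK mulKf.
have := ccvgMl tau%:C^-1 (ccvgB (ccvg_trace TL) (ccvg_shiftS (ccvg_trace TL))).
by rewrite subrr mulr0.
Qed.

End Iteration.

Theorem proposition4p3 (R : realType) (n : nat) (e : 'cV[R[i]]_n) (tau : R) :
  inner e e = 1 -> 0 < tau -> tau < 1 ->
  (* equivalence (1) <-> (2) <-> (3) <-> (4) *)
  (forall S : 'M[R[i]]_n, psd S ->
     [<-> Phi tau e S = S;
          psd_sqrt S *m e = 0;
          S *m e = 0;
          ran_in_perp S e]) /\
  (* every positive operator supported on e^perp is a fixed point *)
  (forall S : 'M[R[i]]_n, psd S -> ran_in_perp S e -> Phi tau e S = S) /\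
  (* iteration: the limit exists, is a fixed point, kills e, ran in e^perp *)
  (forall T0 : 'M[R[i]]_n, psd T0 ->
     (exists Tinf, mx_cvg (fun k => iter k (Phi tau e) T0) Tinf) /\
     (forall Tinf, mx_cvg (fun k => iter k (Phi tau e) T0) Tinf ->
        Phi tau e Tinf = Tinf /\ Tinf *m e = 0 /\ ran_in_perp Tinf e)).
Proof.
move=> e1 tau_gt0 /ltW tau_le1; have tau_neq0 : tau != 0 by rewrite gt_eqF.
split; [|split].
- by move=> S S_psd; apply: Phi_fixed_tfae.
- by move=> S S_psd; apply: (Phi_fixed_tfae e tau_neq0 S_psd 3 0).1.
move=> T0 T0_psd; split; first exact: iter_Phi_cvg.
move=> L TL; have L_psd := psd_mx_cvg (psd_iter_Phi e1 tau_le1 T0_psd) TL.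
have sqrtL_e0 := psd_quad_eq0 L_psd (iter_Phi_lim_quad e1 tau_gt0 tau_le1 T0_psd TL).
have L_fixed := Phi_fixed_tfae e tau_neq0 L_psd.
by split; [|split]; [apply/(L_fixed 1 0) | apply/(L_fixed 1 2) | apply/(L_fixed 1 3)].
Qed.
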